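(* Let $\mathcal{T}$ be a tangle of order $k$ in a connectivity system $(E,\lambda)$, and let $X$ be a $\mathcal{T}$-strong $k$-separating set in $\lambda$. If $X_1$ and $X_2$ are fully closed $k$-separating sets that contain $X$, then there is a fully closed $k$-separating set $Y$ such that $X\subseteq Y\subseteq X_1\cap X_2$.
   Context: A connectivity system is a pair $(E,\lambda)$ with $E$ finite and $\lambda$ an integer-valued symmetric ($\lambda(X)=\lambda(E-X)$) submodular ($\lambda(X)+\lambda(Y)\ge\lambda(X\cup Y)+\lambda(X\cap Y)$) function on subsets of $E$. $X$ is $k$-separating if $\lambda(X)\le k$. A tangle of order $k$ is a collection $\mathcal T$ of subsets of $E$ with (T1) $\lambda(A)<k$ for $A\in\mathcal T$; (T2) if $\lambda(A)\le k-1$ then $A\in\mathcal T$ or $E-A\in\mathcal T$; (T3) $A\cup B\cup C\ne E$ for $A,B,C\in\mathcal T$; (T4) $E-\{e\}\notin\mathcal T$ for $e\in E$. A set is $\mathcal T$-weak if contained in a member of $\mathcal T$, and $\mathcal T$-strong otherwise. A $\mathcal T$-strong $k$-separating set $X$ is fully closed (with respect to $\mathcal T$) if $X\cup Y$ is not $k$-separating for every nonempty $\mathcal T$-weak set $Y\subseteq E-X$. *)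

From mathcomp Require Import all_boot all_order all_algebra.
Set Implicit Arguments. Unset Strict Implicit. Unset Printing Implicit Defensive.
Import Order.TTheory GRing.Theory Num.Theory.
Local Open Scope ring_scope.

Definition connectivity_system (E : finType) (lam : {set E} -> int) : Prop :=
  (forall X : {set E}, lam X = lam (~: X)) /\
  (forall X Y : {set E}, lam (X :|: Y) + lam (X :&: Y) <= lam X + lam Y).

Definition k_separating (E : finType) (lam : {set E} -> int) (k : int)
  (X : {set E}) : Prop := lam X <= k.

Definition tangle (E : finType) (lam : {set E} -> int) (k : int)
  (T : {set {set E}}) : Prop :=
  (forall A, A \in T -> lam A < k) /\
  (forall A, lam A <= k - 1 -> A \in T \/ ~: A \in T) /\
  (forall A B C, A \in T -> B \in T -> C \in T -> A :|: B :|: C != setT) /\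
  (forall e : E, ~: [set e] \notin T).

Definition T_weak (E : finType) (T : {set {set E}}) (X : {set E}) : Prop :=
  exists2 A, A \in T & X \subset A.

Definition T_strong (E : finType) (T : {set {set E}}) (X : {set E}) : Prop :=
  ~ T_weak T X.

Definition fully_closed (E : finType) (lam : {set E} -> int) (k : int)
  (T : {set {set E}}) (X : {set E}) : Prop :=
  T_strong T X /\ k_separating lam k X /\
  (forall Y : {set E}, Y != set0 -> T_weak T Y -> Y \subset ~: X ->
     ~ k_separating lam k (X :|: Y)).

From mathcomp Require Import all_boot all_order all_algebra.
From mathcomp Require Import zify.
Import Order.TTheory.
Set Implicit Arguments. Unset Strict Implicit.
Local Open Scope ring_scope.

(* Take Y maximal among the k-separating sets between X and X1 :&: X2; it is
   T-strong because it contains X.  If a nonempty T-weak Z disjoint from Y had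
   lam (Y :|: Z) <= k, maximality forces Z to leave some X_i.  Then full
   closure of X_i gives lam (X_i :|: Y :|: Z) > k, so by submodularity the
   T-strong set (Y :|: Z) :&: X_i has connectivity < k; by the tangle axiom its
   complement lies in T, making ~: X_i T-weak, and X_i :|: ~: X_i = E is
   k-separating, against the full closure of X_i. *)

Section FullyClosed.

Variables (E : finType) (lam : {set E} -> int) (k : int) (T : {set {set E}}).
Hypothesis lam_conn : connectivity_system lam.
Hypothesis T_tangle : tangle lam k T.

Lemma lam_setT_le (A : {set E}) : lam setT <= lam A.
Proof.
case: lam_conn => lam_sym lam_sub; have := lam_sub A (~: A).
rewrite setUCr setICr -(lam_sym A) (lam_sym set0) setC0; lia.
Qed.

Lemma T_weakS (Z W : {set E}) : Z \subset W -> T_weak T W -> T_weak T Z.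
Proof. by move=> sZW [A AT sWA]; exists A; last exact: subset_trans sWA. Qed.

Lemma T_strongS (Z W : {set E}) : Z \subset W -> T_strong T Z -> T_strong T W.
Proof. by move=> sZW strongZ /(T_weakS sZW). Qed.

Lemma fully_closed_setC_strong (X : {set E}) :
  fully_closed lam k T X -> ~: X != set0 -> T_strong T (~: X).
Proof.
case=> _ [sepX closedX] nzCX weakCX.
apply: (closedX _ nzCX weakCX (subxx _)).
have := lam_setT_le X.
by rewrite /k_separating setUCr in sepX *; lia.
Qed.

Lemma tangle_setC_mem (S : {set E}) :
  T_strong T S -> lam S <= k - 1 -> ~: S \in T.
Proof.
case: T_tangle => _ [T_compl _] strongS /T_compl[ST|] //.
by case: strongS; exists S.
Qed.

Lemma fully_closed_sub_strong_ge (X S : {set E}) :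
  fully_closed lam k T X -> ~: X != set0 ->
  S \subset X -> T_strong T S -> k <= lam S.
Proof.
move=> closedX nzCX sSX strongS; rewrite leNgt; apply/negP => ltSk.
apply: (fully_closed_setC_strong closedX nzCX _).
exists (~: S); last by rewrite setCS.
by apply: tangle_setC_mem => //; lia.
Qed.

Lemma fully_closed_absorbs_weak (X Y Z : {set E}) :
  fully_closed lam k T X -> Y \subset X -> T_strong T Y ->
  T_weak T Z -> k_separating lam k (Y :|: Z) -> Z \subset X.
Proof.
move=> closedX sYX strongY weakZ sepYZ; apply: contraT => nsZX.
have nzZo : Z :\: X != set0 by rewrite setD_eq0.
have sZoCX : Z :\: X \subset ~: X by rewrite setDE subsetIr.
have nzCX : ~: X != set0 by apply: contraNneq nzZo => CX0; rewrite -subset0 -CX0.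
have [_ [sepX closedX']] := closedX.
have /negP := closedX' _ nzZo (T_weakS (subsetDl Z X) weakZ) sZoCX.
have -> : X :|: Z :\: X = (Y :|: Z) :|: X.
  by rewrite setDE setUIr setUCr setIT setUAC (setUidPr sYX).
have ge_k : k <= lam ((Y :|: Z) :&: X).
  apply: fully_closed_sub_strong_ge closedX nzCX (subsetIr _ _) _.
  by apply: T_strongS strongY; rewrite subsetI subsetUl.
have := proj2 lam_conn (Y :|: Z) X.
rewrite /k_separating in sepX sepYZ *; lia.
Qed.

Definition k_sep_between (A B : {set E}) : pred {set E} :=
  [pred W : {set E} | [&& A \subset W, W \subset B & lam W <= k]].

Lemma fully_closed_maxset (X X1 X2 Y : {set E}) :
  fully_closed lam k T X1 -> fully_closed lam k T X2 -> T_strong T X ->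
  maxset (k_sep_between X (X1 :&: X2)) Y ->
  fully_closed lam k T Y.
Proof.
move=> closedX1 closedX2 strongX maxY.
have /and3P[sXY sYX12 sepY] := maxsetp maxY.
have strongY : T_strong T Y := T_strongS sXY strongX.
have /andP[sYX1 sYX2] : (Y \subset X1) && (Y \subset X2) by rewrite -subsetI.
split=> //; split=> // Z nzZ weakZ sZCY sepYZ.
have sZX1 := fully_closed_absorbs_weak closedX1 sYX1 strongY weakZ sepYZ.
have sZX2 := fully_closed_absorbs_weak closedX2 sYX2 strongY weakZ sepYZ.
have eqYZ : Y :|: Z = Y.
  apply: maxsetsup maxY _ (subsetUl _ _).
  rewrite /k_sep_between inE (subset_trans sXY (subsetUl _ _)).
  by rewrite subUset sYX12 subsetI sZX1 sZX2.
have sZY : Z \subset Y by rewrite -eqYZ subsetUr.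
by move: nzZ; rewrite -subset0 -(setICr Y) subsetI sZY sZCY.
Qed.

End FullyClosed.

Theorem lemma3p1 (E : finType) (lam : {set E} -> int) (k : int)
  (T : {set {set E}}) (X X1 X2 : {set E}) :
  connectivity_system lam ->
  tangle lam k T ->
  T_strong T X -> k_separating lam k X ->
  fully_closed lam k T X1 -> X \subset X1 ->
  fully_closed lam k T X2 -> X \subset X2 ->
  exists Y : {set E}, [/\ fully_closed lam k T Y, X \subset Y & Y \subset X1 :&: X2].
Proof.
move=> lam_conn T_tangle strongX sepX closedX1 sXX1 closedX2 sXX2.
have PX : k_sep_between lam k X (X1 :&: X2) X.
  by rewrite /k_sep_between inE subxx subsetI sXX1 sXX2; exact: sepX.
have [Y maxY sXY] := maxset_exists PX.
exists Y; split=> //; last by case/and3P: (maxsetp maxY).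
exact: fully_closed_maxset closedX1 closedX2 strongX maxY.
Qed.
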